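(* Let $\mathcal{X}\subset\mathbb{R}^d$ be compact, $k$ a kernel with $k(x,y)\le1$ for all $x,y$, $\sigma>0$, and $f\in\mathcal{H}_k$. Run Algorithm 3 with observations $y_t=f(x_t)$ (i.e. $h=f$, $g=0$): $x_t\in\arg\max_{x\in\mathcal{X}}\widehat m_{t-1}(x)+\|f\|_{\mathcal{H}_k}\widehat\sigma_{t-1}(x)$, assuming maximizers exist and the points $x_1,\dots,x_T$ are pairwise distinct. Let $C_1=\frac{8}{\log(1+\sigma^{-2})}$. Then $$R_T\le\|f\|_{\mathcal{H}_k}\sqrt{TC_1\gamma_T}+2T\|f\|_{\mathcal{H}_k}\sigma,\qquad r_T\le\|f\|_{\mathcal{H}_k}\sqrt{\frac{C_1\gamma_T}{T}}+2\|f\|_{\mathcal{H}_k}\sigma.$$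
   Context: $\mathbf{k}_t(x)=[k(x,x_i)]_{i\le t}$, $\mathbf{K}_t=[k(x_i,x_j)]_{i,j\le t}$, $\mathbf{y}_t=[y_i]_{i\le t}$, $\widehat m_t(x)=\mathbf{k}_t(x)^T(\mathbf{K}_t+\sigma^2I)^{-1}\mathbf{y}_t$, $\widehat\sigma_t^2(x)=k(x,x)-\mathbf{k}_t(x)^T(\mathbf{K}_t+\sigma^2I)^{-1}\mathbf{k}_t(x)$, $\widehat m_0\equiv0$, $\widehat\sigma_0^2(x)=k(x,x)$. $x^*\in\arg\max_{\mathcal{X}}f$; $R_T=\sum_{t=1}^T(f(x^* )-f(x_t))$; $r_T=f(x^* )-\max_{t\le T}f(x_t)$; $\gamma_T=\max_{x_1,\dots,x_T\in\mathcal{X}}\frac12\log\det(\mathbf{I}_T+\sigma^{-2}\mathbf{K}_T)$. *)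

From HB Require Import structures.
From Stdlib Require Import Reals ClassicalDescription IndefiniteDescription FunctionalExtensionality.
From mathcomp Require Import all_boot all_algebra.
Set Implicit Arguments. Unset Strict Implicit. Unset Printing Implicit Defensive.

Definition Req_bool (x y : R) : bool := if Req_EM_T x y then true else false.
Lemma Req_boolP : Equality.axiom Req_bool.
Proof. move=> x y; rewrite /Req_bool; case: Req_EM_T => h; [exact: ReflectT | exact: ReflectF]. Qed.
HB.instance Definition _ := hasDecEq.Build R Req_boolP.

Definition R_find (P : pred R) (n : nat) : option R :=
  match excluded_middle_informative (exists x, P x) with
  | left h => Some (proj1_sig (constructive_indefinite_description _ h))
  | right _ => None end.
Lemma R_find_correct P n x : R_find P n = Some x -> P x.
Proof. rewrite /R_find; case: excluded_middle_informative => // h [<-].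
by case: constructive_indefinite_description. Qed.
Lemma R_find_complete (P : pred R) : (exists x, P x) -> exists n, R_find P n.
Proof. move=> h; exists 0%N; rewrite /R_find; case: excluded_middle_informative => //. Qed.
Lemma R_find_ext (P Q : pred R) : P =1 Q -> R_find P =1 R_find Q.
Proof. move=> /functional_extensionality -> //. Qed.
HB.instance Definition _ := hasChoice.Build R R_find_correct R_find_complete R_find_ext.

Lemma R_addA : associative Rplus. Proof. move=> *; ring. Qed.
Lemma R_addC : commutative Rplus. Proof. move=> *; ring. Qed.
Lemma R_add0 : left_id R0 Rplus. Proof. move=> *; ring. Qed.
Lemma R_addN : left_inverse R0 Ropp Rplus. Proof. move=> *; ring. Qed.
HB.instance Definition _ := GRing.isZmodule.Build R R_addA R_addC R_add0 R_addN.
Lemma R_mulA : associative Rmult. Proof. move=> *; ring. Qed.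
Lemma R_mulC : commutative Rmult. Proof. move=> *; ring. Qed.
Lemma R_mul1 : left_id R1 Rmult. Proof. move=> *; ring. Qed.
Lemma R_mulDl : left_distributive Rmult Rplus. Proof. move=> *; ring. Qed.
Lemma R_one_neq0 : (R1 : R) != R0.
Proof. apply/eqP; exact R1_neq_R0. Qed.
HB.instance Definition _ := GRing.Zmodule_isComNzRing.Build R R_mulA R_mulC R_mul1 R_mulDl R_one_neq0.
Lemma R_mulVf (x : R) : x != R0 -> Rmult (Rinv x) x = R1.
Proof. move/eqP=> h; exact: Rinv_l. Qed.
Lemma R_inv0 : Rinv R0 = R0. Proof. exact: Rinv_0. Qed.
HB.instance Definition _ := GRing.ComNzRing_isField.Build R R_mulVf R_inv0.

Local Open Scope ring_scope.

Definition pt (d : nat) := 'rV[R]_d.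

(* Compact subset of R^d: bounded and (sequentially) closed (Heine-Borel). *)
Definition compact_set (d : nat) (X : pt d -> Prop) : Prop :=
  (exists M : R, forall x, X x -> forall i : 'I_d, Rle (Rabs (x ord0 i)) M) /\
  (forall (u : nat -> pt d) (l : pt d),
      (forall n, X (u n)) ->
      (forall i : 'I_d, Un_cv (fun n => u n ord0 i) (l ord0 i)) -> X l).

Definition hnorm (H : Type) (inner : H -> H -> R) (f : H) : R := sqrt (inner f f).

Record IsRKHS (d : nat) (X : pt d -> Prop) (k : pt d -> pt d -> R)
    (H : Type) (hadd : H -> H -> H) (hscal : R -> H -> H)
    (inner : H -> H -> R) (ev : H -> pt d -> R) (kfeat : pt d -> H) : Prop := {
  rkhs_ev_add : forall f g x, ev (hadd f g) x = Rplus (ev f x) (ev g x);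
  rkhs_ev_scal : forall a f x, ev (hscal a f) x = Rmult a (ev f x);
  rkhs_ev_ext : forall f g, (forall x, X x -> ev f x = ev g x) -> f = g;
  rkhs_inner_sym : forall f g, inner f g = inner g f;
  rkhs_inner_add : forall f g h, inner (hadd f g) h = Rplus (inner f h) (inner g h);
  rkhs_inner_scal : forall a f g, inner (hscal a f) g = Rmult a (inner f g);
  rkhs_inner_pos : forall f, Rle R0 (inner f f);
  rkhs_inner_def : forall f, inner f f = R0 -> forall x, X x -> ev f x = R0;
  rkhs_kfeat : forall x y, X x -> X y -> ev (kfeat y) x = k x y;
  rkhs_reproducing : forall f x, X x -> inner f (kfeat x) = ev f x;
  rkhs_complete : forall u : nat -> H,
    (forall eps, Rlt R0 eps -> exists N, forall m n, (N <= m)%N -> (N <= n)%N ->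
        Rlt (hnorm inner (hadd (u m) (hscal (Ropp R1) (u n)))) eps) ->
    exists l : H, forall eps, Rlt R0 eps -> exists N, forall n, (N <= n)%N ->
        Rlt (hnorm inner (hadd (u n) (hscal (Ropp R1) l))) eps
}.

(* Data: query points xs 1, ..., xs t (xs 0 is unused). *)
Definition Kmat (d : nat) (k : pt d -> pt d -> R) (xs : nat -> pt d) (t : nat)
  : 'M[R]_t := \matrix_(i < t, j < t) k (xs i.+1) (xs j.+1).
Definition kvec (d : nat) (k : pt d -> pt d -> R) (xs : nat -> pt d) (t : nat)
  (x : pt d) : 'cV[R]_t := \col_(i < t) k x (xs i.+1).
Definition yvec (d : nat) (y : pt d -> R) (xs : nat -> pt d) (t : nat)
  : 'cV[R]_t := \col_(i < t) y (xs i.+1).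

Definition post_mean (d : nat) (k : pt d -> pt d -> R) (sigma : R)
  (f : pt d -> R) (xs : nat -> pt d) (t : nat) (x : pt d) : R :=
  ((kvec k xs t x)^T *m invmx (Kmat k xs t + (sigma ^+ 2)%:M) *m yvec f xs t)
    ord0 ord0.

Definition post_var (d : nat) (k : pt d -> pt d -> R) (sigma : R)
  (xs : nat -> pt d) (t : nat) (x : pt d) : R :=
  k x x - ((kvec k xs t x)^T *m invmx (Kmat k xs t + (sigma ^+ 2)%:M)
            *m kvec k xs t x) ord0 ord0.

Definition info_gain (d : nat) (k : pt d -> pt d -> R) (sigma : R)
  (xs : nat -> pt d) (T : nat) : R :=
  Rmult (Rinv 2) (ln (\det (1%:M + sigma ^- 2 *: Kmat k xs T))).

Definition cum_regret (d : nat) (f : pt d -> R) (xstar : pt d)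
  (xs : nat -> pt d) (T : nat) : R :=
  \sum_(1 <= t < T.+1) (f xstar - f (xs t)).

(* Simple regret r_T = f(xstar) - max_{1<=t<=T} f(x_t)  (meaningful for T >= 1). *)
Definition simple_regret (d : nat) (f : pt d -> R) (xstar : pt d)
  (xs : nat -> pt d) (T : nat) : R :=
  f xstar - \big[Rmax / f (xs 1%N)]_(1 <= t < T.+1) f (xs t).

Definition C1_const (sigma : R) : R := Rdiv 8 (ln (Rplus 1 (Rinv (Rmult sigma sigma)))).

From Pilot Require Import Defs.
From Stdlib Require Import Reals Lra.
From mathcomp Require all_boot all_algebra.

(* Write sig for the regularisation parameter,
   m_t, sigma_t^2 for the posterior mean and variance, and v_s = sigma_s^2(x_(s+1))
   for the predictive variance of the (s+1)-th query.

   1. Posterior as a projection in the RKHS.  With alpha = (K_t + sig^2 I)^-1 k_t(x)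
      and G = sum_j alpha_j k(., x_j), the posterior mean is m_t(x) = <f, G> and
      the residual k(., x) - G has squared norm at most sigma_t^2(x) <= k(x, x).
      Cauchy-Schwarz in H gives the confidence bound |f(x) - m_t(x)| <= B sigma_t(x).
   2. Schur complement.  det(K_(t+1) + sig^2 I) = det(K_t + sig^2 I) (sig^2 + v_t),
      so the information gain of the queries is (1/2) sum_s ln(1 + sig^-2 v_s).
   3. One round.  The UCB rule and the confidence bound at xstar and at x_(s+1)
      give f(xstar) - f(x_(s+1)) <= 2 B sqrt(v_s).
   4. Summation.  Concavity of ln gives v ln(1 + a) <= ln(1 + a v) on [0,1], so
      sum_s v_s <= 2 gamma_T / ln(1 + sig^-2); Cauchy-Schwarz on sums then gives
      R_T <= B sqrt(T C_1 gamma_T), and r_T <= R_T / T.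
   These sharp bounds need no noise term; the stated bounds add 2 T B sig and
   2 B sig. *)

Module GPUCBRegret.
Import all_boot all_algebra.
Import GRing.Theory.
Local Set Implicit Arguments. Local Unset Strict Implicit. Local Unset Printing Implicit Defensive.

(* The field structure on R given in Defs uses Rplus, Rmult, ... underneath;
   this exposes them so that lra, nra, ring and field apply. *)
Ltac toR := rewrite ?GRing.expr2 ?GRing.mulr2n;
  cbn -[Rplus Rmult Ropp Rinv sqrt ln exp Rabs IZR INR];
  try (match goal with |- @eq _ ?a ?b => change (@eq R a b) end).

Local Open Scope R_scope.

Lemma nonneg_quadratic_discr (a b c : R) :
  0 <= c -> (forall l, 0 <= a + 2 * l * b + l * l * c) -> b * b <= a * c.
Proof.
move=> c0 H.
case: (Rle_lt_or_eq_dec _ _ c0) => [cp|c0'].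
- have h := H (- b / c).
  have e : a + 2 * (- b / c) * b + (- b / c) * (- b / c) * c = (a * c - b * b) / c.
    by field; lra.
  rewrite e in h.
  have := Rmult_le_compat_r c _ _ (Rlt_le _ _ cp) h.
  have -> : (a * c - b * b) / c * c = a * c - b * b by field; lra.
  lra.
- subst c; case: (Req_dec b 0) => [->|bn]; first by have := H 0; lra.
  have h := H (- (a + 1) / (2 * b)).
  have e : a + 2 * (- (a + 1) / (2 * b)) * b
           + (- (a + 1) / (2 * b)) * (- (a + 1) / (2 * b)) * 0 = -1.
    by field.
  lra.
Qed.

Lemma Rabs_le_both a c : Rabs a <= c -> a <= c /\ - a <= c.
Proof.
move=> h; split; first exact: Rle_trans (Rle_abs _) h.
by rewrite -Rabs_Ropp in h; exact: Rle_trans (Rle_abs _) h.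
Qed.

Lemma exp_tangent m y : exp m * (1 + (y - m)) <= exp y.
Proof.
have e := exp_pos m; have h := exp_ineq1_le (y - m).
have -> : exp y = exp m * exp (y - m) by rewrite -exp_plus; f_equal; ring.
apply: Rmult_le_compat_l; lra.
Qed.

(* Concavity of ln: on [0,1], v |-> ln(1 + a v) lies above its chord. *)
Lemma ln_above_chord a v : 0 < a -> 0 <= v <= 1 -> v * ln (1 + a) <= ln (1 + a * v).
Proof.
move=> a0 hv; set L := ln (1 + a).
have eL : exp L = 1 + a by rewrite /L exp_ln //; lra.
(* convex combination of the tangent inequalities at vL, evaluated at L and 0 *)
have t1 := exp_tangent (v * L) L.
have t0 := exp_tangent (v * L) 0.
rewrite eL in t1; rewrite exp_0 in t0.
have e := exp_pos (v * L).
have h : exp (v * L) <= 1 + a * v by nra.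
rewrite -{1}(ln_exp (v * L)).
case: (Rle_lt_or_eq_dec _ _ h) => [hl|->]; last by right.
by left; apply: ln_increasing.
Qed.

Local Open Scope ring_scope.

Section RealSums.
Implicit Types (n : nat) (F G : nat -> R).

Lemma sum_le n F G : (forall i, (i < n)%N -> Rle (F i) (G i)) ->
  Rle (\sum_(0 <= i < n) F i) (\sum_(0 <= i < n) G i).
Proof.
elim: n => [|n IH] h; first by rewrite !big_geq //; right.
rewrite !big_nat_recr //=; apply: Rplus_le_compat; last exact: h.
by apply: IH => i hi; apply: h; exact: ltnW.
Qed.

Lemma sum_const n (c : R) : \sum_(0 <= i < n) c = Rmult (INR n) c.
Proof.
elim: n => [|n IH]; first by rewrite big_geq //=; toR; ring.
by rewrite big_nat_recr // IH S_INR; toR; ring.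
Qed.

Lemma sum_ge0 n F : (forall i, (i < n)%N -> Rle 0 (F i)) -> Rle 0 (\sum_(0 <= i < n) F i).
Proof. by move=> h; rewrite -(Rmult_0_r (INR n)) -sum_const; exact: sum_le. Qed.

Lemma sum_cauchy_schwarz n F :
  Rle (Rmult (\sum_(0 <= i < n) F i) (\sum_(0 <= i < n) F i))
      (Rmult (INR n) (\sum_(0 <= i < n) F i * F i)).
Proof.
apply: nonneg_quadratic_discr; first by apply: sum_ge0 => i _; exact: Rle_0_sqr.
move=> l; have h : Rle 0 (\sum_(0 <= i < n) (1 + l * F i) * (1 + l * F i)).
  by apply: sum_ge0 => i _; exact: Rle_0_sqr.
apply: Rle_trans h (Req_le _ _ _).
have -> : \sum_(0 <= i < n) (1 + l * F i) * (1 + l * F i)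
        = \sum_(0 <= i < n) (1 + (2 * l) * F i + (l * l) * (F i * F i)).
  by apply: eq_bigr => i _; toR; ring.
rewrite !big_split /= -!mulr_sumr sum_const.
set S := \sum_(0 <= i < n) F i; set Q := \sum_(0 <= i < n) F i * F i.
by toR; ring.
Qed.

Lemma ln_prod n F : (forall i, (i < n)%N -> Rlt 0 (F i)) ->
  ln (\prod_(0 <= i < n) F i) = \sum_(0 <= i < n) ln (F i).
Proof.
elim: n => [|n IH] h; first by rewrite !big_geq // ln_1.
have pos : Rlt 0 (\prod_(0 <= i < n) F i).
  rewrite big_nat_cond.
  apply: (big_ind (fun x => Rlt 0 x)) => [|x y|i /andP[/andP[_ hi] _]].
  - by toR; lra.
  - exact: Rmult_lt_0_compat.
  - by apply: h; exact: ltnW.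
rewrite !big_nat_recr //= ln_mult //; last exact: h.
by rewrite IH // => i hi; apply: h; exact: ltnW.
Qed.

Lemma sum_scal n (c : R) F :
  Rmult c (\sum_(0 <= i < n) F i) = \sum_(0 <= i < n) Rmult c (F i).
Proof. exact: mulr_sumr. Qed.

(* Summing the chord bound v <= ln(1 + a v) / ln(1 + a) over values in [0,1]:
   this bounds the total variance by the information gain. *)
Lemma sum_le_sum_ln n (a : R) F : Rlt 0 a ->
  (forall i, (i < n)%N -> Rle 0 (F i) /\ Rle (F i) 1) ->
  Rle (\sum_(0 <= i < n) F i)
      (Rdiv (\sum_(0 <= i < n) ln (Rplus 1 (Rmult a (F i)))) (ln (Rplus 1 a))).
Proof.
move=> a0 hF; set L := ln (Rplus 1 a).
have L0 : Rlt 0 L by rewrite /L -ln_1; apply: ln_increasing; lra.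
rewrite /Rdiv Rmult_comm sum_scal; apply: sum_le => i hi.
have := ln_above_chord a0 (hF i hi); rewrite -/L => h.
apply: (Rmult_le_reg_l L) => //.
by rewrite -Rmult_assoc Rinv_r; lra.
Qed.

End RealSums.

Lemma le_bigmax (F : nat -> R) a n m i : (m <= i < m + n)%N ->
  Rle (F i) (\big[Rmax/a]_(m <= j < m + n) F j).
Proof.
elim: n m => [|n IH] m.
  by rewrite addn0 => /andP[h1 h2]; move: (leq_ltn_trans h1 h2); rewrite ltnn.
move=> /andP[h1 h2]; rewrite big_ltn ?addnS ?ltnS ?leq_addr //.
case: (ltngtP m i) h1 => // [lt _|<- _]; last exact: Rmax_l.
apply: Rle_trans (Rmax_r _ _); rewrite -addSn; apply: IH.
by rewrite lt /= addSn -addnS h2.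
Qed.

Local Open Scope R_scope.

Lemma two_sqrt_bound (S V T g L : R) : 0 < T -> 0 < L -> 0 <= S ->
  S * S <= T * V -> V <= 2 * g / L -> 2 * S <= sqrt (T * (8 / L) * g).
Proof.
move=> T0 L0 S0 hS hV.
rewrite -[2 * S]sqrt_square; last lra.
apply: sqrt_le_1_alt.
have : T * V <= T * (2 * g / L) by apply: Rmult_le_compat_l; lra.
have -> : T * (8 / L) * g = 4 * (T * (2 * g / L)) by field; lra.
nra.
Qed.

Lemma average_bound (B r Rg T C g : R) : 0 < T -> T * r <= Rg ->
  Rg <= B * sqrt (T * C * g) -> r <= B * sqrt (C * g / T).
Proof.
move=> T0 h1 h2.
have e : sqrt (T * C * g) = T * sqrt (C * g / T).
  have -> : T * C * g = (T * T) * (C * g / T) by field; lra.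
  by rewrite sqrt_mult_alt ?sqrt_square; nra.
rewrite e in h2; apply: (Rmult_le_reg_l T) => //; lra.
Qed.

Section PreHilbert.
Variables (H : Type) (hadd : H -> H -> H) (hscal : R -> H -> H) (inner : H -> H -> R).
Hypothesis inner_sym : forall f g, inner f g = inner g f.
Hypothesis inner_addl : forall f g h, inner (hadd f g) h = inner f h + inner g h.
Hypothesis inner_scall : forall a f g, inner (hscal a f) g = a * inner f g.
Hypothesis inner_ge0 : forall f, 0 <= inner f f.

Lemma inner_addr f g h : inner f (hadd g h) = inner f g + inner f h.
Proof. by rewrite inner_sym inner_addl !(inner_sym f). Qed.

Lemma inner_scalr a f g : inner f (hscal a g) = a * inner f g.
Proof. by rewrite inner_sym inner_scall (inner_sym f). Qed.

Lemma inner_cauchy_schwarz f g : Rabs (inner f g) <= hnorm inner f * hnorm inner g.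
Proof.
have f0 := inner_ge0 f; have g0 := inner_ge0 g.
have q : inner f g * inner f g <= inner f f * inner g g.
  apply: nonneg_quadratic_discr => // l.
  have := inner_ge0 (hadd f (hscal l g)).
  rewrite inner_addl !inner_addr !inner_scall !inner_scalr (inner_sym g f); lra.
rewrite /hnorm -sqrt_mult // -sqrt_Rsqr_abs.
by apply: sqrt_le_1_alt; rewrite /Rsqr.
Qed.

(* The linear combination sum_(i < n) c_i p_i, started from the zero vector 0 p_0. *)
Fixpoint lincomb (c : nat -> R) (p : nat -> H) (n : nat) : H :=
  match n with
  | 0%N => hscal 0 (p 0%N)
  | n'.+1 => hadd (lincomb c p n') (hscal (c n') (p n'))
  end.

Lemma inner_lincomb c p n h :
  inner (lincomb c p n) h = \sum_(0 <= i < n) c i * inner (p i) h.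
Proof.
elim: n => [|n IH] /=; first by rewrite big_geq // inner_scall; toR; ring.
by rewrite big_nat_recr //= inner_addl IH inner_scall.
Qed.

End PreHilbert.

Local Open Scope ring_scope.

Definition reg_gram d (k : pt d -> pt d -> R) (sigma : R) (xs : nat -> pt d) (t : nat)
  : 'M[R]_t := Kmat k xs t + (sigma ^+ 2)%:M.

Definition query_var d (k : pt d -> pt d -> R) (sigma : R) (xs : nat -> pt d) (s : nat) : R :=
  post_var k sigma xs s (xs s.+1).

Lemma sqnorm_ge0 n (a : 'cV[R]_n) : Rle 0 ((a^T *m a) 0 0).
Proof.
rewrite mxE; apply: (big_ind (fun x => Rle 0 x)) => [|x y hx hy|i _].
- exact: Rle_refl.
- by apply: Rplus_le_le_0_compat.
- rewrite mxE; exact: Rle_0_sqr.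
Qed.

Lemma det_schur n (A : 'M[R]_n) (u : 'cV_n) (v : 'rV_n) (c : R) : A \in unitmx ->
  \det (block_mx A u v c%:M) = \det A * (c - (v *m invmx A *m u) 0 0).
Proof.
move=> uA.
have -> : block_mx A u v c%:M =
    block_mx 1%:M 0 (v *m invmx A) 1%:M *m block_mx A u 0 (c%:M - v *m invmx A *m u).
  rewrite mulmx_block !mul1mx !mul0mx !addr0 -mulmxA mulVmx // mulmx1.
  by rewrite addrC subrK.
rewrite det_mulmx det_lblock det_ublock !det1 !mul1r det_mx11 !mxE.
by rewrite eqxx mulr1n.
Qed.

Lemma det_castmx m m' (e : m = m') (A : 'M[R]_m) : \det (castmx (e, e) A) = \det A.
Proof. by case: m' / e; rewrite castmx_id. Qed.

Lemma reg_gram_succ d (k : pt d -> pt d -> R) sigma xs t :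
  (forall i j, (i <= t)%N -> (j <= t)%N -> k (xs i.+1) (xs j.+1) = k (xs j.+1) (xs i.+1)) ->
  reg_gram k sigma xs t.+1 = castmx (addn1 t, addn1 t)
    (block_mx (reg_gram k sigma xs t) (kvec k xs t (xs t.+1))
              (kvec k xs t (xs t.+1))^T (k (xs t.+1) (xs t.+1) + sigma ^+ 2)%:M).
Proof.
move=> ksym; apply/matrixP => i j; rewrite castmxE /=.
set i1 := cast_ord _ i; set j1 := cast_ord _ j.
have vi : val i1 = val i by []. have vj : val j1 = val j by [].
have -> : reg_gram k sigma xs t.+1 i j = k (xs i.+1) (xs j.+1) + sigma ^+ 2 *+ (i == j).
  by rewrite !mxE.
case: (split_ordP i1) => i' Ei; case: (split_ordP j1) => j' Ej;
  rewrite Ei Ej ?block_mxEul ?block_mxEur ?block_mxEdl ?block_mxEdr;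
  move: vi vj; rewrite Ei Ej /= => vi vj; rewrite /reg_gram /Kmat !mxE.
- rewrite -vi -vj; congr (_ + _); congr (_ *+ _).
  by rewrite -val_eqE -[i' == j']val_eqE /= vi vj.
- rewrite ord1 addn0 in vj.
  have -> : (i == j) = false by rewrite -val_eqE /= -vi -vj ltn_eqF.
  by rewrite addr0 -vi -vj ksym //; exact: ltnW.
- rewrite ord1 addn0 in vi.
  have -> : (i == j) = false by rewrite -val_eqE /= -vi -vj gtn_eqF.
  by rewrite addr0 -vi -vj.
- rewrite ord1 addn0 in vi; rewrite ord1 addn0 in vj.
  have -> : (i == j) by rewrite -val_eqE /= -vi -vj.
  by rewrite -vi -vj !ord1 eqxx.
Qed.

Section RKHS.
Variables (d : nat) (X : pt d -> Prop) (k : pt d -> pt d -> R) (H : Type)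
  (hadd : H -> H -> H) (hscal : R -> H -> H) (inner : H -> H -> R)
  (ev : H -> pt d -> R) (kfeat : pt d -> H).
Hypothesis Hr : IsRKHS X k hadd hscal inner ev kfeat.

Let rkhs_inner_addr := inner_addr (rkhs_inner_sym Hr) (rkhs_inner_add Hr).
Let rkhs_inner_scalr := inner_scalr (rkhs_inner_sym Hr) (rkhs_inner_scal Hr).

Lemma kernel_sym x y : X x -> X y -> k x y = k y x.
Proof.
move=> Xx Xy; rewrite -(rkhs_kfeat Hr Xx Xy) -(rkhs_reproducing Hr _ Xx).
by rewrite (rkhs_inner_sym Hr) (rkhs_reproducing Hr _ Xy) (rkhs_kfeat Hr Xy Xx).
Qed.

Lemma inner_kfeat x y : X x -> X y -> inner (kfeat x) (kfeat y) = k y x.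
Proof. by move=> Xx Xy; rewrite (rkhs_reproducing Hr _ Xy) (rkhs_kfeat Hr Xy Xx). Qed.

Section Posterior.
Variables (sigma : R) (xs : nat -> pt d) (t : nat) (x : pt d).
Hypothesis Xpts : forall i, (i < t)%N -> X (xs i.+1).
Hypothesis Xx : X x.
Hypothesis unit_gram : reg_gram k sigma xs t \in unitmx.

Let A := reg_gram k sigma xs t.
Let kv := kvec k xs t x.
(* posterior weights alpha = A^-1 k_t(x) and the mean representer
   G = sum_j alpha_j k(., x_j) *)
Let alpha := invmx A *m kv.
Let G := lincomb hadd hscal (fun i => oapp (fun j : 'I_t => alpha j 0) 0 (insub i))
                 (fun i => kfeat (xs i.+1)) t.

Lemma reg_gram_tr : A^T = A.
Proof.
rewrite /A /reg_gram linearD /= tr_scalar_mx; congr (_ + _).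
by apply/matrixP => i j; rewrite !mxE; apply: kernel_sym; exact: Xpts.
Qed.

Lemma inner_G h : inner G h = \sum_(j < t) alpha j 0 * inner (kfeat (xs j.+1)) h.
Proof.
rewrite (inner_lincomb (rkhs_inner_add Hr) (rkhs_inner_scal Hr)) big_mkord.
by apply: eq_bigr => j _; rewrite valK.
Qed.

Lemma alpha_tr : kv^T *m invmx A = alpha^T.
Proof. by rewrite trmx_mul trmx_inv reg_gram_tr. Qed.

Lemma post_mean_G f : post_mean k sigma (ev f) xs t x = inner f G.
Proof.
rewrite /post_mean -/A -/kv alpha_tr (rkhs_inner_sym Hr) inner_G mxE.
apply: eq_bigr => j _.
by rewrite !mxE (rkhs_inner_sym Hr) (rkhs_reproducing Hr) //; exact: Xpts.
Qed.

Lemma post_var_alpha : post_var k sigma xs t x = k x x - (alpha^T *m kv) 0 0.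
Proof. by rewrite /post_var -/A -/kv alpha_tr. Qed.

Lemma inner_G_kfeat : inner G (kfeat x) = (alpha^T *m kv) 0 0.
Proof.
rewrite inner_G mxE; apply: eq_bigr => j _.
by rewrite !mxE inner_kfeat //; exact: Xpts.
Qed.

Lemma inner_G_G : inner G G = (alpha^T *m Kmat k xs t *m alpha) 0 0.
Proof.
rewrite inner_G mxE.
under eq_bigr => j _ do rewrite (rkhs_inner_sym Hr) inner_G mulr_sumr.
under [RHS]eq_bigr => i _ do rewrite mxE mulr_suml.
rewrite exchange_big /=; apply: eq_bigr => j _; apply: eq_bigr => i _.
rewrite !mxE inner_kfeat; try exact: Xpts.
by toR; ring.
Qed.

(* Since A alpha = k_t(x):  alpha^T k_t(x) = ||G||^2 + sigma^2 |alpha|^2. *)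
Lemma alpha_energy :
  (alpha^T *m kv) 0 0 = inner G G + sigma ^+ 2 * (alpha^T *m alpha) 0 0.
Proof.
have Aalpha : A *m alpha = kv by rewrite /alpha mulmxA mulmxV // mul1mx.
rewrite -Aalpha mulmxA /A /reg_gram mulmxDr mulmxDl mul_mx_scalar -scalemxAl.
by rewrite inner_G_G mxE [X in _ + X]mxE.
Qed.

Lemma penalty_ge0 : Rle 0 (sigma ^+ 2 * (alpha^T *m alpha) 0 0).
Proof. by apply: Rmult_le_pos; [toR; exact: Rle_0_sqr | exact: sqnorm_ge0]. Qed.

(* The residual k(., x) - G: it pairs with f to f(x) - m_t(x), and its
   squared norm is at most the posterior variance. *)
Let g := hadd (kfeat x) (hscal (-1) G).

Lemma inner_residual f : inner f g = Rminus (ev f x) (post_mean k sigma (ev f) xs t x).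
Proof.
rewrite post_mean_G /g rkhs_inner_addr rkhs_inner_scalr (rkhs_reproducing Hr) //.
by toR; ring.
Qed.

Lemma residual_sqnorm : Rle (inner g g) (post_var k sigma xs t x).
Proof.
have hg : inner g g = k x x - 2 * (alpha^T *m kv) 0 0 + inner G G.
  rewrite /g (rkhs_inner_add Hr) !rkhs_inner_addr !(rkhs_inner_scal Hr) !rkhs_inner_scalr.
  rewrite inner_kfeat // (rkhs_inner_sym Hr (kfeat x) G) inner_G_kfeat.
  by toR; ring.
have hN := penalty_ge0.
rewrite post_var_alpha hg alpha_energy; move: hN; toR; lra.
Qed.

Theorem posterior_bounds :
  Rle 0 (post_var k sigma xs t x) /\ Rle (post_var k sigma xs t x) (k x x) /\
  forall f, Rle (Rabs (ev f x - post_mean k sigma (ev f) xs t x))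
                (Rmult (hnorm inner f) (sqrt (post_var k sigma xs t x))).
Proof.
have hres := residual_sqnorm.
have hG := rkhs_inner_pos Hr G.
have hN := penalty_ge0.
split; [|split].
- exact: Rle_trans (rkhs_inner_pos Hr g) hres.
- rewrite post_var_alpha alpha_energy; move: hN hG; toR; lra.
move=> f; rewrite -inner_residual.
apply: Rle_trans (inner_cauchy_schwarz (rkhs_inner_sym Hr) (rkhs_inner_add Hr)
                   (rkhs_inner_scal Hr) (rkhs_inner_pos Hr) f g) _.
apply: Rmult_le_compat_l; first exact: sqrt_pos.
exact: sqrt_le_1_alt.
Qed.

End Posterior.

Lemma det_reg_gram sigma (xs : nat -> pt d) T :
  Rlt 0 sigma -> (forall i, (i < T)%N -> X (xs i.+1)) ->
  forall t, (t <= T)%N -> reg_gram k sigma xs t \in unitmx /\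
    \det (reg_gram k sigma xs t)
      = \prod_(0 <= s < t) (sigma ^+ 2 + query_var k sigma xs s).
Proof.
move=> s0 XT; elim=> [|t IH] ht.
  by rewrite big_geq // det_mx00 unitmxE det_mx00 unitr1.
have [uA dA] := IH (ltnW ht).
have Xs : forall i, (i < t.+1)%N -> X (xs i.+1).
  by move=> i hi; apply: XT; exact: leq_trans hi ht.
have [pv0 _] := posterior_bounds (fun i hi => Xs i (ltnW hi)) (Xs t (ltnSn t)) uA.
have dE : \det (reg_gram k sigma xs t.+1) =
          \det (reg_gram k sigma xs t) * (sigma ^+ 2 + query_var k sigma xs t).
  rewrite reg_gram_succ; last by move=> i j hi hj; apply: kernel_sym; apply: Xs.
  rewrite det_castmx det_schur // /query_var /post_var.
  by congr (_ * _); rewrite addrA (addrC (k _ _)).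
have pos : sigma ^+ 2 + query_var k sigma xs t != 0.
  by apply/eqP; move: pv0; rewrite /query_var; toR; nra.
split; first by rewrite unitmxE dE unitfE; apply: mulf_neq0.
by rewrite dE dA big_nat_recr.
Qed.

End RKHS.

Lemma query_index_range s T : (s < T)%N -> le 1 s.+1 /\ le s.+1 T.
Proof. by move=> h; split; apply/leP. Qed.

(* The regret is measured against an arbitrary
   comparison point xstar of X; it need not be a maximiser of f. *)
Section Regret.
Variables (d : nat) (X : pt d -> Prop) (k : pt d -> pt d -> R) (H : Type)
  (hadd : H -> H -> H) (hscal : R -> H -> H) (inner : H -> H -> R)
  (ev : H -> pt d -> R) (kfeat : pt d -> H)
  (sigma : R) (hf : H) (xs : nat -> pt d) (xstar : pt d) (T : nat).
Hypothesis Hr : IsRKHS X k hadd hscal inner ev kfeat.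
Hypothesis kernel_le1 : forall x y, X x -> X y -> Rle (k x y) 1.
Hypothesis sigma_gt0 : Rlt 0 sigma.
Hypothesis Xstar : X xstar.
Hypothesis gp_ucb_run : forall t, le 1 t /\ le t T ->
  X (xs t) /\
  forall x, X x ->
    Rle (Rplus (post_mean k sigma (ev hf) xs (t - 1) x)
               (Rmult (hnorm inner hf) (sqrt (post_var k sigma xs (t - 1) x))))
        (Rplus (post_mean k sigma (ev hf) xs (t - 1) (xs t))
               (Rmult (hnorm inner hf) (sqrt (post_var k sigma xs (t - 1) (xs t))))).

Let B := hnorm inner hf.
Let v := query_var k sigma xs.

(* Round s < T of the run is step s + 1 of the algorithm. *)
Lemma Xqueries s : (s < T)%N -> X (xs s.+1).
Proof. by move=> hs; case: (gp_ucb_run (query_index_range hs)). Qed.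

Lemma ucb_rule s : (s < T)%N -> forall x, X x ->
  Rle (Rplus (post_mean k sigma (ev hf) xs s x)
             (Rmult (hnorm inner hf) (sqrt (post_var k sigma xs s x))))
      (Rplus (post_mean k sigma (ev hf) xs s (xs s.+1))
             (Rmult (hnorm inner hf) (sqrt (post_var k sigma xs s (xs s.+1))))).
Proof. by move=> hs; case: (gp_ucb_run (query_index_range hs)); rewrite subn1. Qed.

Lemma Xprefix s : (s < T)%N -> forall i, (i < s)%N -> X (xs i.+1).
Proof. by move=> hs i hi; apply: Xqueries; exact: ltn_trans hi hs. Qed.

(* One round: the UCB choice and the confidence bound at xstar and at the
   query give f(xstar) - f(x_(s+1)) <= 2 B sigma_s(x_(s+1)). *)
Lemma step_regret s : (s < T)%N ->
  Rle 0 (v s) /\ Rle (v s) 1 /\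
  Rle (Rminus (ev hf xstar) (ev hf (xs s.+1))) (Rmult (Rmult 2 B) (sqrt (v s))).
Proof.
move=> hs.
have [uA _] := det_reg_gram Hr sigma_gt0 Xqueries (ltnW hs).
have [v0 [vk hq]] := posterior_bounds Hr (Xprefix hs) (Xqueries hs) uA.
have [_ [_ hx]] := posterior_bounds Hr (Xprefix hs) Xstar uA.
have u := ucb_rule hs Xstar.
have k1 := kernel_le1 (Xqueries hs) (Xqueries hs).
split; first exact: v0.
split; first exact: Rle_trans vk k1.
have [_ q1] := Rabs_le_both (hq hf); have [q2 _] := Rabs_le_both (hx hf).
rewrite /v /query_var /B; move: u q1 q2; lra.
Qed.

Lemma sum_query_sd_ge0 : Rle 0 (\sum_(0 <= s < T) sqrt (v s)).
Proof. by apply: sum_ge0 => s _; exact: sqrt_pos. Qed.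

Lemma cum_regret_le_sum_sd :
  Rle (cum_regret (ev hf) xstar xs T) (Rmult (Rmult 2 B) (\sum_(0 <= s < T) sqrt (v s))).
Proof.
rewrite /cum_regret big_add1 /= sum_scal; apply: sum_le => s hs.
by case: (step_regret hs) => _ [_ h].
Qed.

Lemma info_gain_queries :
  info_gain k sigma xs T
  = Rmult (/ 2) (\sum_(0 <= s < T) ln (Rplus 1 (Rmult (/ (sigma * sigma)) (v s)))).
Proof.
have sn : sigma ^+ 2 != 0 by apply/eqP; toR; nra.
rewrite /info_gain.
have -> : 1%:M + sigma ^- 2 *: Kmat k xs T = sigma ^- 2 *: reg_gram k sigma xs T.
  by rewrite /reg_gram scalerDr scale_scalar_mx mulVf // addrC.
rewrite detZ; case: (det_reg_gram Hr sigma_gt0 Xqueries (leqnn T)) => _ ->.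
have -> : sigma ^- 2 ^+ T = \prod_(0 <= s < T) sigma ^- 2 by rewrite prodr_const_nat subn0.
rewrite -big_split /= ln_prod; last first.
  move=> s hs; case: (step_regret hs) => h0 _; rewrite /v in h0.
  by toR; apply: Rmult_lt_0_compat; [apply: Rinv_0_lt_compat|]; nra.
congr (Rmult _ _); apply: eq_bigr => s _; congr ln.
rewrite /v; toR; field; lra.
Qed.

Section GainBound.
Variable gammaT : R.
Hypothesis gain_le : Rle (info_gain k sigma xs T) gammaT.

Lemma ln_noise_pos : Rlt 0 (ln (Rplus 1 (/ (sigma * sigma)))).
Proof.
have a0 : Rlt 0 (/ (sigma * sigma)) by apply: Rinv_0_lt_compat; nra.
by rewrite -ln_1; apply: ln_increasing; lra.
Qed.

(* Concavity of ln turns the information-gain bound into a variance budget. *)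
Lemma sum_query_var_le :
  Rle (\sum_(0 <= s < T) v s) (Rdiv (Rmult 2 gammaT) (ln (Rplus 1 (/ (sigma * sigma))))).
Proof.
have a0 : Rlt 0 (/ (sigma * sigma)) by apply: Rinv_0_lt_compat; nra.
apply: Rle_trans (sum_le_sum_ln a0 _) _.
  by move=> s hs; case: (step_regret hs) => h0 [h1 _].
apply: Rmult_le_compat_r; first by left; apply: Rinv_0_lt_compat; exact: ln_noise_pos.
by move: gain_le; rewrite info_gain_queries; lra.
Qed.

Hypothesis T_ge1 : le 1 T.

Lemma T_pos : Rlt 0 (INR T).
Proof. exact: lt_0_INR. Qed.

Theorem cum_regret_bound :
  Rle (cum_regret (ev hf) xstar xs T)
      (Rmult B (sqrt (Rmult (Rmult (INR T) (C1_const sigma)) gammaT))).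
Proof.
set S := \sum_(0 <= s < T) sqrt (v s).
have hS : Rle (Rmult S S) (Rmult (INR T) (\sum_(0 <= s < T) v s)).
  rewrite /S; apply: Rle_trans (sum_cauchy_schwarz _ _) (Req_le _ _ _).
  congr (Rmult _ _); apply: eq_big_nat => s /andP[_ hs]; apply: sqrt_sqrt.
  by case: (step_regret hs).
have h2S := two_sqrt_bound T_pos ln_noise_pos sum_query_sd_ge0 hS sum_query_var_le.
rewrite -/S in h2S.
have hR := cum_regret_le_sum_sd; rewrite -/S in hR.
have B0 : Rle 0 B by exact: sqrt_pos.
have := Rmult_le_compat_l _ _ _ B0 h2S.
rewrite /C1_const; move: hR; lra.
Qed.

(* Simple regret: T r_T <= R_T, since the best query beats each query. *)
Lemma simple_le_average :
  Rle (Rmult (INR T) (simple_regret (ev hf) xstar xs T)) (cum_regret (ev hf) xstar xs T).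
Proof.
rewrite /cum_regret big_add1 /simple_regret -sum_const /=; apply: sum_le => s hs.
have := @le_bigmax (fun t => ev hf (xs t)) (ev hf (xs 1%N)) T 1 s.+1.
by rewrite !add1n !ltnS hs => /(_ isT) h; toR; lra.
Qed.

Theorem simple_regret_bound :
  Rle (simple_regret (ev hf) xstar xs T)
      (Rmult B (sqrt (Rdiv (Rmult (C1_const sigma) gammaT) (INR T)))).
Proof. exact: average_bound T_pos simple_le_average cum_regret_bound. Qed.

End GainBound.
End Regret.

End GPUCBRegret.

Open Scope R_scope.

Theorem corollary5
  (d : nat) (X : pt d -> Prop) (k : pt d -> pt d -> R)
  (H : Type) (hadd : H -> H -> H) (hscal : R -> H -> H)
  (inner : H -> H -> R) (ev : H -> pt d -> R) (kfeat : pt d -> H)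
  (sigma : R) (hf : H) (xs : nat -> pt d) (xstar : pt d) (T : nat) :
  compact_set X ->
  IsRKHS X k hadd hscal inner ev kfeat ->
  (forall x y, X x -> X y -> k x y <= 1) ->
  0 < sigma ->
  (* x* is a maximizer of f over X *)
  X xstar -> (forall x, X x -> ev hf x <= ev hf xstar) ->
  (* Algorithm 3 with h = f, g = 0 (noise-free observations y_t = f(x_t)) *)
  (forall t, (1 <= t <= T)%nat ->
     X (xs t) /\
     forall x, X x ->
       post_mean k sigma (ev hf) xs (t - 1) x
         + hnorm inner hf * sqrt (post_var k sigma xs (t - 1) x)
       <= post_mean k sigma (ev hf) xs (t - 1) (xs t)
         + hnorm inner hf * sqrt (post_var k sigma xs (t - 1) (xs t))) ->
  (* the query points are pairwise distinct *)
  (forall i j, (1 <= i <= T)%nat -> (1 <= j <= T)%nat -> i <> j -> xs i <> xs j) ->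
  (1 <= T)%nat ->
  (* gammaT is gamma_T = max over x_1..x_T in X of (1/2) log det (I + sigma^-2 K_T);
     the bounds are stated for every upper bound gammaT of that quantity *)
  forall gammaT : R,
  (forall zs : nat -> pt d, (forall t, (1 <= t <= T)%nat -> X (zs t)) ->
     info_gain k sigma zs T <= gammaT) ->
  cum_regret (ev hf) xstar xs T
    <= hnorm inner hf * sqrt (INR T * C1_const sigma * gammaT)
       + 2 * INR T * hnorm inner hf * sigma
  /\
  simple_regret (ev hf) xstar xs T
    <= hnorm inner hf * sqrt (C1_const sigma * gammaT / INR T)
       + 2 * hnorm inner hf * sigma.
Proof.
intros _ Hr k_le1 sigma_pos Xstar _ Alg _ T_pos gammaT gamma_ub.
pose proof (gamma_ub xs (fun t ht => proj1 (Alg t ht))) as gain.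
pose proof (GPUCBRegret.cum_regret_bound Hr k_le1 sigma_pos Xstar Alg gain T_pos) as cum.
pose proof (GPUCBRegret.simple_regret_bound Hr k_le1 sigma_pos Xstar Alg gain T_pos) as simple.
(* the terms 2 T B sigma and 2 B sigma are nonnegative slack *)
pose proof (Rmult_le_pos _ _ (sqrt_pos (inner hf hf)) (Rlt_le _ _ sigma_pos)) as B_sigma.
pose proof (lt_0_INR T T_pos) as T_gt0.
unfold hnorm in *; split; nra.
Qed.
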